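(* Let $\mathcal{X}$ be a nonempty open convex subset of $\mathbb{R}^n$ and let $\textbf{F}:\mathcal{X}\to I(\mathbb{R})$ be $gH$-differentiable on $\mathcal{X}$. If $\textbf{F}$ is convex on $\mathcal{X}$, then \[(y-x)^T\odot\nabla\textbf{F}(x)\preceq\textbf{F}(y)\ominus_{gH}\textbf{F}(x)\quad\text{for all }x,y\in\mathcal{X}.\]
   Context: $I(\mathbb{R})$: closed bounded intervals $\textbf{A}=[\underline{a},\overline{a}]$ with Moore arithmetic ($\oplus$ endpointwise; $\lambda\odot\textbf{A}=[\lambda\underline{a},\lambda\overline{a}]$ if $\lambda\ge0$, $[\lambda\overline{a},\lambda\underline{a}]$ if $\lambda<0$); $gH$-difference $\textbf{A}\ominus_{gH}\textbf{B}=[\min\{\underline{a}-\underline{b},\overline{a}-\overline{b}\},\max\{\underline{a}-\underline{b},\overline{a}-\overline{b}\}]$; limits in the norm $\max\{|\underline{a}|,|\overline{a}|\}$. $\textbf{A}\preceq\textbf{B}$ iff $\underline{a}\le\underline{b}$ and $\overline{a}\le\overline{b}$. An IVF is $\textbf{F}(x)=[\underline{f}(x),\overline{f}(x)]$. $D_i\textbf{F}(x)=\lim_{h\to0}\frac1h\odot(\textbf{F}(x+he_i)\ominus_{gH}\textbf{F}(x))$, $\nabla\textbf{F}(x)=(D_1\textbf{F}(x),\dots,D_n\textbf{F}(x))^T$, $d^T\odot\nabla\textbf{F}(x)=\bigoplus_i d_i\odot D_i\textbf{F}(x)$. Linear IVF: $\textbf{L}(x)=\bigoplus_i x_i\odot\textbf{L}(e_i)$.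 $\textbf{F}$ is $gH$-differentiable at $\bar{x}$ if there exist a linear IVF $\textbf{L}_{\bar{x}}$, an IVF $\textbf{E}(\textbf{F}(\bar{x});d)$ and $\delta>0$ with $(\textbf{F}(\bar{x}+d)\ominus_{gH}\textbf{F}(\bar{x}))\ominus_{gH}\textbf{L}_{\bar{x}}(d)=\lVert d\rVert\odot\textbf{E}(\textbf{F}(\bar{x});d)$ for $\lVert d\rVert<\delta$ and $\textbf{E}\to\textbf{0}$ as $\lVert d\rVert\to0$; on $\mathcal{X}$ means at every point. $\textbf{F}$ is convex if $\textbf{F}(\lambda x_1+(1-\lambda)x_2)\preceq\lambda\odot\textbf{F}(x_1)\oplus(1-\lambda)\odot\textbf{F}(x_2)$ for all $x_1,x_2\in\mathcal{X}$, $\lambda\in[0,1]$. *)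

From HB Require Import structures.
From mathcomp Require Import all_boot all_order all_algebra.
From mathcomp Require Import all_classical all_reals all_analysis.
Set Implicit Arguments. Unset Strict Implicit. Unset Printing Implicit Defensive.
Import Order.TTheory GRing.Theory Num.Theory.
Import numFieldNormedType.Exports.
Local Open Scope classical_set_scope.
Local Open Scope ring_scope.

Section IntervalArith.
Variable R : realType.

(* A closed bounded interval [lo, hi] is represented by the pair (lo, hi);
   it is a genuine element of I(R) when lo <= hi (predicate [iwf]). *)
Definition itv := (R * R)%type.
Definition iwf (A : itv) : Prop := A.1 <= A.2.

Definition iadd (A B : itv) : itv := (A.1 + B.1, A.2 + B.2).
Definition iscale (l : R) (A : itv) : itv :=
  if 0 <= l then (l * A.1, l * A.2) else (l * A.2, l * A.1).
Definition igH (A B : itv) : itv :=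
  (Num.min (A.1 - B.1) (A.2 - B.2), Num.max (A.1 - B.1) (A.2 - B.2)).
Definition inorm (A : itv) : R := Num.max `|A.1| `|A.2|.
Definition ile (A B : itv) : Prop := A.1 <= B.1 /\ A.2 <= B.2.
Definition izero : itv := (0, 0).
Definition isum n (G : 'I_n -> itv) : itv :=
  (\sum_(i < n) (G i).1, \sum_(i < n) (G i).2).

Definition vnorm n (d : 'rV[R]_n) : R := Num.sqrt (\sum_(i < n) d ord0 i ^+ 2).
Definition evec n (i : 'I_n) : 'rV[R]_n := delta_mx ord0 i.

Definition idot n (d : 'rV[R]_n) (G : 'I_n -> itv) : itv :=
  isum (fun i => iscale (d ord0 i) (G i)).
(* linear IVF L(x) = (+)_i x_i (.) L(e_i), given by Le i = L(e_i) *)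
Definition ilin n (Le : 'I_n -> itv) (x : 'rV[R]_n) : itv := idot x Le.

Definition ivf_on n (X : set 'rV[R]_n) (F : 'rV[R]_n -> itv) : Prop :=
  forall x, X x -> iwf (F x).

Definition is_partial_gH n (F : 'rV[R]_n -> itv) (x : 'rV[R]_n) (i : 'I_n)
  (D : itv) : Prop :=
  forall eps : R, 0 < eps -> exists delta : R, 0 < delta /\
    forall h : R, 0 < `|h| < delta ->
      inorm (igH (iscale h^-1 (igH (F (x + h *: evec i)) (F x))) D) < eps.

Definition gH_differentiable_at n (F : 'rV[R]_n -> itv) (xb : 'rV[R]_n) : Prop :=
  exists (Le : 'I_n -> itv) (E : 'rV[R]_n -> itv) (delta : R),
    (forall i, iwf (Le i)) /\ (forall d, iwf (E d)) /\ 0 < delta /\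
    (forall d, vnorm d < delta ->
        igH (igH (F (xb + d)) (F xb)) (ilin Le d) = iscale (vnorm d) (E d)) /\
    (forall eps : R, 0 < eps -> exists eta : R, 0 < eta /\
        forall d, 0 < vnorm d < eta -> inorm (E d) < eps).

Definition gH_differentiable_on n (X : set 'rV[R]_n) (F : 'rV[R]_n -> itv) : Prop :=
  forall x, X x -> gH_differentiable_at F x.

Definition convex_set_rV n (X : set 'rV[R]_n) : Prop :=
  forall x1 x2 (l : R), X x1 -> X x2 -> 0 <= l <= 1 ->
    X (l *: x1 + (1 - l) *: x2).

Definition convex_ivf n (X : set 'rV[R]_n) (F : 'rV[R]_n -> itv) : Prop :=
  forall x1 x2 (l : R), X x1 -> X x2 -> 0 <= l <= 1 ->
    ile (F (l *: x1 + (1 - l) *: x2)) (iadd (iscale l (F x1)) (iscale (1 - l) (F x2))).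

End IntervalArith.

From HB Require Import structures.
From mathcomp Require Import all_boot all_order all_algebra.
From mathcomp Require Import all_classical all_reals all_analysis.
From mathcomp Require Import lra.
Import Order.TTheory GRing.Theory Num.Theory.
Import numFieldNormedType.Exports.
Local Open Scope classical_set_scope.
Local Open Scope ring_scope.

Set Implicit Arguments.
Unset Strict Implicit.

(* The gradient is the linear part [L] of the gH-expansion at [x]; restricting
   the expansion to [d = h e_i] shows [L(e_i)] is the i-th partial derivative.
   For [d = y - x] and small [t > 0], convexity of both endpoint functions gives
   [F(x + t d) -gH F(x) <= t (F(y) -gH F(x))], while the expansion says that
   [F(x + t d) -gH F(x)] is within [o(t)] of [L(t d) = t L(d)] endpointwise.
   Dividing by [t] and letting [t -> 0] yields [L(d) <= F(y) -gH F(x)]. *)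

Section IntervalFacts.
Variable R : realType.
Implicit Types (A B C : itv R) (t : R).

Lemma inorm_igH A B : inorm (igH A B) = Num.max `|A.1 - B.1| `|A.2 - B.2|.
Proof.
rewrite /inorm /igH /= [Num.min _ _]minEle [Num.max (_ - _) _]maxEle.
by case: leP => //= _; exact: maxC.
Qed.

Lemma inorm_iscale t A : 0 <= t -> inorm (iscale t A) = t * inorm A.
Proof. by move=> t0; rewrite /iscale t0 /inorm /= !normrM (ger0_norm t0) maxr_pMr. Qed.

Lemma inorm_igH_iscaleV t A B : t != 0 ->
  inorm (igH (iscale t^-1 A) B) = `|t|^-1 * inorm (igH A (iscale t B)).
Proof.
move=> t0; rewrite !inorm_igH /iscale invr_ge0.
have normV a b : `|t^-1 * a - b| = `|t|^-1 * `|a - t * b|.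
  by rewrite -normfV -normrM mulrBr mulrA mulVf // mul1r.
by case: ifP => _ /=; rewrite !normV maxr_pMr ?invr_ge0 ?normr_ge0 // maxC.
Qed.

Lemma le_add_inorm_igH A B r : inorm (igH A B) <= r ->
  B.1 <= A.1 + r /\ B.2 <= A.2 + r.
Proof.
rewrite inorm_igH ge_max !ler_norml => /andP[/andP[h1 _] /andP[h2 _]].
by split; lra.
Qed.

Lemma ile_igH_iscale t A B C : 0 <= t ->
  A.1 - B.1 <= t * (C.1 - B.1) -> A.2 - B.2 <= t * (C.2 - B.2) ->
  ile (igH A B) (iscale t (igH C B)).
Proof.
move=> t0 h1 h2; rewrite /ile /iscale t0 /= minr_pMr // maxr_pMr //.
split; first by rewrite le_min !ge_min h1 h2 orbT.
by rewrite ge_max !le_max h1 h2 orbT.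
Qed.

End IntervalFacts.

Section VectorFacts.
Variables (R : realType) (n : nat).
Implicit Types (d : 'rV[R]_n) (Le : 'I_n -> itv R) (t : R) (i : 'I_n).

Lemma vnorm_ge0 d : 0 <= vnorm d.
Proof. exact: sqrtr_ge0. Qed.

Lemma vnorm_scale t d : 0 <= t -> vnorm (t *: d) = t * vnorm d.
Proof.
move=> t0; rewrite /vnorm; under eq_bigr do rewrite mxE exprMn.
by rewrite -mulr_sumr sqrtrM ?sqr_ge0 // sqrtr_sqr ger0_norm.
Qed.

Lemma vnorm_scale_evec t i : vnorm (t *: evec R i) = `|t|.
Proof.
rewrite /vnorm (bigD1 i) //= big1 ?addr0; first by rewrite !mxE !eqxx mulr1 sqrtr_sqr.
by move=> j ji; rewrite !mxE eqxx (negbTE ji) mulr0 expr0n.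
Qed.

Lemma ilin_scale Le t d : 0 < t -> ilin Le (t *: d) = iscale t (ilin Le d).
Proof.
move=> t0; rewrite /ilin /idot /isum /iscale (ltW t0) /= !mulr_sumr.
by congr pair; apply: eq_bigr => i _; rewrite mxE pmulr_rge0 //; case: ifP; rewrite mulrA.
Qed.

Lemma ilin_scale_evec Le t i : ilin Le (t *: evec R i) = iscale t (Le i).
Proof.
have scale0 A : iscale 0 A = (0, 0) by rewrite /iscale lexx !mul0r.
rewrite /ilin /idot /isum (bigD1 i) //= [X in (_, X)](bigD1 i) //= !big1 ?addr0.
- by rewrite !mxE !eqxx mulr1; case: iscale.
- by move=> j ji; rewrite !mxE eqxx (negbTE ji) mulr0 scale0.
- by move=> j ji; rewrite !mxE eqxx (negbTE ji) mulr0 scale0.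
Qed.

End VectorFacts.

Definition gH_remainder (R : realType) n (F : 'rV[R]_n -> itv R) (x : 'rV[R]_n)
    (Le : 'I_n -> itv R) (d : 'rV[R]_n) : itv R :=
  igH (igH (F (x + d)) (F x)) (ilin Le d).

Lemma gH_remainder_littleo (R : realType) n (F : 'rV[R]_n -> itv R) (x : 'rV[R]_n)
    (Le : 'I_n -> itv R) (E : 'rV[R]_n -> itv R) (delta : R) : 0 < delta ->
  (forall d, vnorm d < delta -> gH_remainder F x Le d = iscale (vnorm d) (E d)) ->
  (forall eps : R, 0 < eps -> exists eta : R, 0 < eta /\
     forall d, 0 < vnorm d < eta -> inorm (E d) < eps) ->
  forall e : R, 0 < e -> exists2 eta : R, 0 < eta &
    forall d, vnorm d < eta -> inorm (gH_remainder F x Le d) <= vnorm d * e.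
Proof.
move=> delta_gt0 expansion E_vanishes e e_gt0.
have [eta [eta_gt0 E_small]] := E_vanishes e e_gt0.
exists (Num.min delta eta) => [|d]; first by rewrite lt_min delta_gt0.
rewrite lt_min => /andP[d_delta d_eta].
rewrite expansion // inorm_iscale ?vnorm_ge0 //.
have [->|d_gt0] := eqVneq (vnorm d) 0; first by rewrite !mul0r.
rewrite ler_wpM2l ?vnorm_ge0 // ltW // E_small // d_eta andbT lt_def d_gt0.
exact: vnorm_ge0.
Qed.

Lemma convex_ivf_igH_chord (R : realType) n (F : 'rV[R]_n -> itv R) (X : set 'rV[R]_n)
    (x y : 'rV[R]_n) (t : R) : convex_ivf X F -> X x -> X y ->
  0 < t -> t <= 1 ->
  ile (igH (F (x + t *: (y - x))) (F x)) (iscale t (igH (F y) (F x))).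
Proof.
move=> convexF Xx Xy /ltW t_ge0 t_le1.
have [c1 c2] := convexF y x t Xy Xx (introT andP (conj t_ge0 t_le1)).
have -> : x + t *: (y - x) = t *: y + (1 - t) *: x.
  by rewrite scalerBr scalerBl scale1r addrCA.
rewrite /iadd /iscale t_ge0 subr_ge0 t_le1 /= !mulrBl !mul1r in c1 c2.
by apply: ile_igH_iscale; rewrite // mulrBr; lra.
Qed.

Section GHLinearization.
Variables (R : realType) (n : nat) (F : 'rV[R]_n -> itv R) (x : 'rV[R]_n).
Variable Le : 'I_n -> itv R.
Implicit Types (d : 'rV[R]_n) (e : R).
Hypothesis remainder_littleo : forall e : R, 0 < e -> exists2 eta : R, 0 < eta &
  forall d, vnorm d < eta -> inorm (gH_remainder F x Le d) <= vnorm d * e.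

Lemma is_partial_gH_linearization i : is_partial_gH F x i (Le i).
Proof.
move=> eps eps_gt0; have half_gt0 : 0 < eps / 2 by rewrite divr_gt0.
have [eta eta_gt0 small] := remainder_littleo half_gt0.
exists eta; split=> // h /andP[h_gt0 h_eta].
rewrite inorm_igH_iscaleV -?normr_gt0 // -(ilin_scale_evec Le).
have := small (h *: evec R i); rewrite vnorm_scale_evec => /(_ h_eta) bound.
rewrite -ler_pdivrMl // in bound; apply: le_lt_trans bound _.
by rewrite ltr_pdivrMr //; lra.
Qed.

Lemma gH_remainder_along d e : 0 < e ->
  exists t, 0 < t <= 1 /\ inorm (gH_remainder F x Le (t *: d)) <= t * e.
Proof.
move=> e_gt0; set s := vnorm d + 1.
have s_gt0 : 0 < s by rewrite ltr_wpDl ?vnorm_ge0.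
have [eta eta_gt0 small] := remainder_littleo (divr_gt0 e_gt0 s_gt0).
set t := Num.min 1 (eta / 2 / s).
have t_gt0 : 0 < t by rewrite lt_min ltr01 !divr_gt0.
have ts_le : t * s <= eta / 2 by rewrite -ler_pdivlMr // ge_min lexx orbT.
have td_le : t * vnorm d <= t * s by rewrite ler_wpM2l ?(ltW t_gt0) // lerDl.
have td_lt : vnorm (t *: d) < eta by rewrite vnorm_scale ?(ltW t_gt0) //; lra.
exists t; split; first by rewrite t_gt0 ge_min lexx.
apply: le_trans (small _ td_lt) _.
rewrite vnorm_scale ?(ltW t_gt0) // -mulrA ler_wpM2l ?(ltW t_gt0) // mulrCA.
by rewrite ler_piMr ?(ltW e_gt0) // ler_pdivrMr // mul1r lerDl.
Qed.

Lemma convex_ivf_ilin_le (X : set 'rV[R]_n) y : convex_ivf X F -> X x -> X y ->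
  ile (ilin Le (y - x)) (igH (F y) (F x)).
Proof.
move=> convexF Xx Xy; set d := y - x.
suff approx e : 0 < e ->
    (ilin Le d).1 <= (igH (F y) (F x)).1 + e /\ (ilin Le d).2 <= (igH (F y) (F x)).2 + e.
  by split; apply/ler_addgt0Pr => e /approx[].
move=> e_gt0; have [t [/andP[t_gt0 t_le1] small]] := gH_remainder_along d e_gt0.
have chord := convex_ivf_igH_chord convexF Xx Xy t_gt0 t_le1.
have [r1 r2] := le_add_inorm_igH small.
move: chord r1 r2; rewrite ilin_scale // /ile /iscale (ltW t_gt0) /= => -[c1 c2] r1 r2.
by split; rewrite -(ler_pM2l t_gt0) mulrDr; lra.
Qed.

End GHLinearization.

Theorem theorem3p3 (R : realType) (n : nat) (X : set 'rV[R]_n)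
  (F : 'rV[R]_n -> itv R) :
  X !=set0 -> open X -> convex_set_rV X ->
  ivf_on X F -> gH_differentiable_on X F -> convex_ivf X F ->
  forall x y, X x -> X y ->
    exists grad : 'I_n -> itv R,
      (forall i, iwf (grad i) /\ is_partial_gH F x i (grad i)) /\
      ile (idot (y - x) grad) (igH (F y) (F x)).
Proof.
move=> _ _ _ _ differentiableF convexF x y Xx Xy.
have [Le [E [delta [Le_wf [_ [delta_gt0 [expansion E_vanishes]]]]]]] :=
  differentiableF x Xx.
have littleo := gH_remainder_littleo delta_gt0 expansion E_vanishes.
exists Le; split.
- by move=> i; split; [exact: Le_wf | exact: is_partial_gH_linearization littleo i].
- exact: (convex_ivf_ilin_le littleo convexF Xx Xy).
Qed.
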